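(* Consider the discrete-time $Geo^X/G_r^{(a,b)}/1$ queue with single ($\delta=0$) or multiple ($\delta=1$) vacations described in the context, with $\rho<1$. Then for all $n\ge0$ and $a\le i\le b-1$, $$p^+_{n,i}=\Big[(1-\delta)\sum_{m=0}^{a-1}Q^+_m\sum_{j=m}^{a-1}e_{j,m}g_{i-j}+\big(p^+_i+Q^+_i\big)\Big]k^{(i)}_n,$$ where $k^{(i)}_n$ is the coefficient of $x^n$ in $K^{(i)}(x)$, i.e. the probability of $n$ arriving customers during the service time of a batch of size $i$.
   Context: Time is slotted. Fix integers $1\le a\le b$, $\lambda\in(0,1)$, $\bar\lambda=1-\lambda$, and a group-size distribution $(g_m)_{m\ge1}$ with finite mean $\bar g$ and pgf $G(z)=\sum_{m\ge1}g_mz^m$; $g_m=0$ for $m\le0$. In each slot a group arrives with probability $\lambda$, with size distribution $(g_m)$. Service follows the $(a,b)$ bulk rule (start only if at least $a$ wait; take all if $a\le r\le b$ wait, exactly $b$ if more than $b$ wait). A batch of size $r$ ($a\le r\le b$) has service-time pmf $s_r(n)$, $n\ge1$, pgf $S_r^*(z)$, mean $s_r$, $\mu_b=1/s_b$. Vacation times have pmf $v_n$, $n\ge1$, pgf $V^*(z)$, finite mean. $\delta=0$: single vacation (server stays dormant after a vacation until $a$ wait); $\delta=1$: multiple vacations. $\rho=\lambda\bar g/(b\mu_b)<1$. Stationary probabilities $p_{n,0}$ ($0\le n\le a-1$, dormant), $p_{n,r}(u)$ ($n\ge0$ waiting, batch size $a\le r\le b$ in service, remaining service $u\ge1$), $Q_n(u)$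 ($n\ge0$ waiting, on vacation, remaining vacation $u\ge1$) satisfy: (E1) $p_{0,0}=(1-\delta)[\bar\lambda p_{0,0}+\bar\lambda Q_0(1)]$; (E2) $p_{n,0}=(1-\delta)[\bar\lambda p_{n,0}+\lambda\sum_{i=1}^ng_ip_{n-i,0}+\bar\lambda Q_n(1)+\lambda\sum_{i=1}^ng_iQ_{n-i}(1)]$, $1\le n\le a-1$; (E3) $p_{0,r}(u)=\bar\lambda p_{0,r}(u+1)+s_r(u)\big[\sum_{m=a}^b(\bar\lambda p_{r,m}(1)+\lambda\sum_{i=1}^rg_ip_{r-i,m}(1))+\bar\lambda Q_r(1)+\lambda\sum_{i=1}^rg_iQ_{r-i}(1)+(1-\delta)\lambda\sum_{i=0}^{a-1}g_{r-i}p_{i,0}\big]$, $a\le r\le b$; (E4) $p_{n,r}(u)=\bar\lambda p_{n,r}(u+1)+\lambda\sum_{i=1}^ng_ip_{n-i,r}(u+1)$, $n\ge1$, $a\le r\le b-1$; (E5) $p_{n,b}(u)=\bar\lambda p_{n,b}(u+1)+\lambda\sum_{i=1}^ng_ip_{n-i,b}(u+1)+s_b(u)\big[\sum_{m=a}^b(\bar\lambda p_{n+b,m}(1)+\lambda\sum_{i=1}^{n+b}g_ip_{n+b-i,m}(1))+\bar\lambda Q_{n+b}(1)+\lambda\sum_{i=1}^{n+b}g_iQ_{n+b-i}(1)+(1-\delta)\lambda\sum_{i=0}^{a-1}g_{n+b-i}p_{i,0}\big]$, $n\ge1$; (E6) $Q_0(u)=\bar\lambda Q_0(u+1)+\bar\lambda(\sum_{m=a}^bp_{0,m}(1)+\delta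 Q_0(1))v_u$; (E7) $Q_n(u)=\bar\lambda Q_n(u+1)+\lambda\sum_{i=1}^ng_iQ_{n-i}(u+1)+v_u\big[\bar\lambda(\sum_{m=a}^bp_{n,m}(1)+\delta Q_n(1))+\lambda\sum_{i=1}^ng_i(\sum_{m=a}^bp_{n-i,m}(1)+\delta Q_{n-i}(1))\big]$, $1\le n\le a-1$; (E8) $Q_n(u)=\bar\lambda Q_n(u+1)+\lambda\sum_{i=1}^ng_iQ_{n-i}(u+1)$, $n\ge a$; (N) $(1-\delta)\sum_{n=0}^{a-1}p_{n,0}+\sum_{n,r,u}p_{n,r}(u)+\sum_{n,u}Q_n(u)=1$. With $\tau=\sum_{m\ge0}\sum_{r=a}^bp_{m,r}(1)+\sum_{m\ge0}Q_m(1)$: $p^+_{0,r}=\tau^{-1}\bar\lambda p_{0,r}(1)$, $p^+_{n,r}=\tau^{-1}(\bar\lambda p_{n,r}(1)+\lambda\sum_{i=1}^ng_ip_{n-i,r}(1))$ ($n\ge1$, $a\le r\le b$) are the joint queue/server-content probabilities at service completion epochs; $p^+_n=\sum_{r=a}^bp^+_{n,r}$; $Q^+_0=\tau^{-1}\bar\lambda Q_0(1)$, $Q^+_n=\tau^{-1}(\bar\lambda Q_n(1)+\lambda\sum_{i=1}^ng_iQ_{n-i}(1))$ ($n\ge1$). $K^{(r)}(x)=S_r^*(\bar\lambda+\lambda G(x))$. $e_{n,i}$ ($0\le i\le n$): $e_{n,n}=1$, $e_{n,n-1}=g_1$, $e_{n,i}=\sum_{j=i+1}^{n-1}e_{n,j}g_{j-i}+g_{n-i}$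 for $0\le i\le n-2$. *)

From Stdlib Require Import Reals Lra Lia List.
From Coquelicot Require Import Coquelicot.
Open Scope R_scope.

(* rsum m n f = f m + f (m+1) + ... + f n ; empty (= 0) when n < m. *)
Definition rsum (m n : nat) (f : nat -> R) : R :=
  fold_right Rplus 0 (map f (seq m (S n - m))).

(* indicator of delta (delta = true : multiple vacations, delta = 1) *)
Definition dR (delta : bool) : R := if delta then 1 else 0.

Definition pmf1 (f : nat -> R) : Prop :=
  f 0%nat = 0 /\ (forall n, 0 <= f n) /\ is_series f 1.

Definition finite_mean (f : nat -> R) : Prop :=
  ex_series (fun n => INR n * f n).

Definition mean (f : nat -> R) : R := Series (fun n => INR n * f n).

(* arr lam g u n = P(n customers arrive in u slots) = coefficient of x^n in
   (1 - lam + lam G(x))^u, computed by the convolution recursion. *)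
Fixpoint arr (lam : R) (g : nat -> R) (u n : nat) : R :=
  match u with
  | O => if Nat.eqb n 0 then 1 else 0
  | S u' => (1 - lam) * arr lam g u' n
            + lam * rsum 1 n (fun i => g i * arr lam g u' (n - i))
  end.

(* k^(r)_n = coefficient of x^n in K^(r)(x) = S_r^*(1-lam+lam G(x))
           = sum_u s_r(u) [x^n](1-lam+lam G(x))^u *)
Definition kcoef (lam : R) (g : nat -> R) (s : nat -> nat -> R) (r n : nat) : R :=
  Series (fun u => s r u * arr lam g u n).

(* e_{n,i}: e_{n,n} = 1, e_{n,n-1} = g_1,
   e_{n,i} = sum_{j=i+1}^{n-1} e_{n,j} g_{j-i} + g_{n-i} (0 <= i <= n-2).
   (The general clause also yields g_1 for i = n-1.)  Fuel-driven recursion;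
   fuel S n suffices since n - j < n - i. Values for i > n are unused (0). *)
Fixpoint eaux (g : nat -> R) (fuel n i : nat) : R :=
  match fuel with
  | O => 0
  | S f =>
    if Nat.eqb i n then 1
    else if Nat.ltb n i then 0
    else rsum (S i) (n - 1) (fun j => eaux g f n j * g (j - i)%nat) + g (n - i)%nat
  end.

Definition ecoef (g : nat -> R) (n i : nat) : R := eaux g (S n) n i.

(* Balance equations (E1)-(E8), normalization (N), nonnegativity.
   p0 n       = p_{n,0}        (0 <= n <= a-1)
   p n r u    = p_{n,r}(u)     (n >= 0, a <= r <= b, u >= 1)
   Q n u      = Q_n(u)         (n >= 0, u >= 1)                               *)
Definition stationary (a b : nat) (lam : R) (g : nat -> R) (s : nat -> nat -> R)
  (v : nat -> R) (delta : bool)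
  (p0 : nat -> R) (p : nat -> nat -> nat -> R) (Q : nat -> nat -> R) : Prop :=
  let lb := 1 - lam in
  let dd := dR delta in
  (forall n, (n <= a - 1)%nat -> 0 <= p0 n) /\
  (forall n r u, (a <= r <= b)%nat -> (1 <= u)%nat -> 0 <= p n r u) /\
  (forall n u, (1 <= u)%nat -> 0 <= Q n u) /\
  (* (E1) *)
  p0 0%nat = (1 - dd) * (lb * p0 0%nat + lb * Q 0%nat 1%nat) /\
  (* (E2) *)
  (forall n, (1 <= n <= a - 1)%nat ->
     p0 n = (1 - dd) * (lb * p0 n + lam * rsum 1 n (fun i => g i * p0 (n - i)%nat)
                        + lb * Q n 1%nat
                        + lam * rsum 1 n (fun i => g i * Q (n - i)%nat 1%nat))) /\
  (* (E3) *)
  (forall r u, (a <= r <= b)%nat -> (1 <= u)%nat ->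
     p 0%nat r u = lb * p 0%nat r (S u)
       + s r u * (rsum a b (fun m => lb * p r m 1%nat
                       + lam * rsum 1 r (fun i => g i * p (r - i)%nat m 1%nat))
                  + lb * Q r 1%nat
                  + lam * rsum 1 r (fun i => g i * Q (r - i)%nat 1%nat)
                  + (1 - dd) * lam * rsum 0 (a - 1) (fun i => g (r - i)%nat * p0 i))) /\
  (* (E4) *)
  (forall n r u, (1 <= n)%nat -> (a <= r <= b - 1)%nat -> (1 <= u)%nat ->
     p n r u = lb * p n r (S u)
       + lam * rsum 1 n (fun i => g i * p (n - i)%nat r (S u))) /\
  (* (E5) *)
  (forall n u, (1 <= n)%nat -> (1 <= u)%nat ->
     p n b u = lb * p n b (S u)
       + lam * rsum 1 n (fun i => g i * p (n - i)%nat b (S u))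
       + s b u * (rsum a b (fun m => lb * p (n + b)%nat m 1%nat
                       + lam * rsum 1 (n + b) (fun i => g i * p (n + b - i)%nat m 1%nat))
                  + lb * Q (n + b)%nat 1%nat
                  + lam * rsum 1 (n + b) (fun i => g i * Q (n + b - i)%nat 1%nat)
                  + (1 - dd) * lam * rsum 0 (a - 1) (fun i => g (n + b - i)%nat * p0 i))) /\
  (* (E6) *)
  (forall u, (1 <= u)%nat ->
     Q 0%nat u = lb * Q 0%nat (S u)
       + lb * (rsum a b (fun m => p 0%nat m 1%nat) + dd * Q 0%nat 1%nat) * v u) /\
  (* (E7) *)
  (forall n u, (1 <= n <= a - 1)%nat -> (1 <= u)%nat ->
     Q n u = lb * Q n (S u) + lam * rsum 1 n (fun i => g i * Q (n - i)%nat (S u))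
       + v u * (lb * (rsum a b (fun m => p n m 1%nat) + dd * Q n 1%nat)
                + lam * rsum 1 n (fun i => g i * (rsum a b (fun m => p (n - i)%nat m 1%nat)
                                                  + dd * Q (n - i)%nat 1%nat)))) /\
  (* (E8) *)
  (forall n u, (a <= n)%nat -> (1 <= u)%nat ->
     Q n u = lb * Q n (S u) + lam * rsum 1 n (fun i => g i * Q (n - i)%nat (S u))) /\
  (* (N), with the convergence of all the series involved *)
  (forall n r, (a <= r <= b)%nat -> ex_series (fun u => p n r (S u))) /\
  (forall n, ex_series (fun u => Q n (S u))) /\
  ex_series (fun n => rsum a b (fun r => Series (fun u => p n r (S u)))) /\
  ex_series (fun n => Series (fun u => Q n (S u))) /\
  (1 - dd) * rsum 0 (a - 1) p0
    + Series (fun n => rsum a b (fun r => Series (fun u => p n r (S u))))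
    + Series (fun n => Series (fun u => Q n (S u))) = 1.

(* tau and the service-completion-epoch probabilities.
   For n = 0 the formula below reduces to lb * p_{0,r}(1) (empty sum). *)
Definition tau (a b : nat) (p : nat -> nat -> nat -> R) (Q : nat -> nat -> R) : R :=
  Series (fun m => rsum a b (fun r => p m r 1%nat)) + Series (fun m => Q m 1%nat).

Definition pplus (a b : nat) (lam : R) (g : nat -> R)
  (p : nat -> nat -> nat -> R) (Q : nat -> nat -> R) (n r : nat) : R :=
  / tau a b p Q * ((1 - lam) * p n r 1%nat
                   + lam * rsum 1 n (fun i => g i * p (n - i)%nat r 1%nat)).

Definition pplus_tot (a b : nat) (lam : R) (g : nat -> R)
  (p : nat -> nat -> nat -> R) (Q : nat -> nat -> R) (n : nat) : R :=
  rsum a b (fun r => pplus a b lam g p Q n r).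

Definition Qplus (a b : nat) (lam : R) (g : nat -> R)
  (p : nat -> nat -> nat -> R) (Q : nat -> nat -> R) (n : nat) : R :=
  / tau a b p Q * ((1 - lam) * Q n 1%nat
                   + lam * rsum 1 n (fun i => g i * Q (n - i)%nat 1%nat)).

(** During the service of a batch of size [i < b] the state only changes by
    arrivals, so by (E3)-(E4) the sequence [u |-> p_{n,i}(u)] obeys a linear
    recursion driven by the rate [C_i] at which such services start (the bracket
    of (E3)).  Its solution [C_i * sum_k s_i(u+k) [x^n](1-lam+lam G(x))^k] is the
    only bounded one, since the difference of two bounded solutions gets multiplied
    by [1 - lam] at each step back in [u].  At a service completion this gives
    [p^+_{n,i} = C_i k^(i)_n / tau].  The first terms of [C_i] are
    [tau (p^+_i + Q^+_i)].  For single vacations, (E1)-(E2) say that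
    [tau Q^+_m] is obtained from [lam p_{.,0}] by convolution with [1 - G]; the coefficients
    [e_{n,m}] form the inverse of the unitriangular matrix of that convolution,
    which turns the dormant term [lam sum_j g_{i-j} p_{j,0}] into the [e]-sum. *)

From Stdlib Require Import Reals Lra Lia List.
From Coquelicot Require Import Coquelicot.
Open Scope R_scope.

Lemma rsum_empty m n f : (n < m)%nat -> rsum m n f = 0.
Proof. intros H. unfold rsum. replace (S n - m)%nat with 0%nat by lia. reflexivity. Qed.

Lemma rsum_first m n f : (m <= n)%nat -> rsum m n f = f m + rsum (S m) n f.
Proof. intros H. unfold rsum. replace (S n - m)%nat with (S (S n - S m)) by lia. reflexivity. Qed.

Lemma rsum_last m n f : (m <= S n)%nat -> rsum m (S n) f = rsum m n f + f (S n).
Proof.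
  intros H. unfold rsum. replace (S (S n) - m)%nat with (S (S n - m)) by lia.
  rewrite seq_S, map_app, fold_right_app. cbn [map fold_right].
  replace (m + (S n - m))%nat with (S n) by lia.
  induction (map f (seq m (S n - m))) as [|x l IH]; simpl; [|rewrite IH]; ring.
Qed.

Lemma rsum_single n f : rsum n n f = f n.
Proof. rewrite rsum_first, rsum_empty by lia. ring. Qed.

Lemma rsum_shift m n f : rsum (S m) (S n) f = rsum m n (fun i => f (S i)).
Proof. unfold rsum. simpl (S (S n) - S m)%nat. rewrite <- seq_shift, map_map. reflexivity. Qed.

Lemma rsum_ext m n f h :
  (forall i, (m <= i <= n)%nat -> f i = h i) -> rsum m n f = rsum m n h.
Proof.
  intros Hfh. unfold rsum. f_equal. apply map_ext_in.
  intros i Hi. apply in_seq in Hi. apply Hfh. lia.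
Qed.

Lemma rsum_plus m n f h : rsum m n (fun i => f i + h i) = rsum m n f + rsum m n h.
Proof.
  unfold rsum. induction (seq m (S n - m)) as [|i l IH]; simpl; [|rewrite IH]; ring.
Qed.

Lemma rsum_scal m n c f : rsum m n (fun i => c * f i) = c * rsum m n f.
Proof.
  unfold rsum. induction (seq m (S n - m)) as [|i l IH]; simpl; [|rewrite IH]; ring.
Qed.

Lemma rsum_le m n f h :
  (forall i, (m <= i <= n)%nat -> f i <= h i) -> rsum m n f <= rsum m n h.
Proof.
  intros Hfh. unfold rsum.
  assert (Hl : forall i, In i (seq m (S n - m)) -> f i <= h i)
    by (intros i Hi; apply in_seq in Hi; apply Hfh; lia).
  revert Hl. induction (seq m (S n - m)) as [|i l IH]; simpl; intros Hl; [lra|].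
  apply Rplus_le_compat; [apply Hl | apply IH]; auto.
Qed.

Lemma rsum_nonneg m n f : (forall i, (m <= i <= n)%nat -> 0 <= f i) -> 0 <= rsum m n f.
Proof.
  intros Hf. replace 0 with (rsum m n (fun i => 0 * f i)) by (rewrite rsum_scal; ring).
  apply rsum_le. intros i Hi. rewrite Rmult_0_l. auto.
Qed.

Lemma rsum_reflect n f : rsum 0 n (fun i => f (n - i)%nat) = rsum 0 n f.
Proof.
  revert f. induction n as [|n IH]; intros f.
  - rewrite !rsum_single. reflexivity.
  - rewrite rsum_first, rsum_shift by lia.
    rewrite (rsum_ext 0 n _ (fun i => f (n - i)%nat)) by reflexivity.
    rewrite IH, rsum_last, Nat.sub_0_r by lia. ring.
Qed.

Lemma rsum_exchange n F :
  rsum 0 n (fun m => rsum m n (fun j => F j m)) = rsum 0 n (fun j => rsum 0 j (fun m => F j m)).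
Proof.
  induction n as [|n IH].
  - rewrite !rsum_single. reflexivity.
  - rewrite (rsum_ext 0 (S n) _ (fun m => rsum m n (fun j => F j m) + F (S n) m))
      by (intros m Hm; apply rsum_last; lia).
    rewrite rsum_plus, (rsum_last 0 n (fun m => rsum m n _)), (rsum_empty (S n) n), IH by lia.
    rewrite (rsum_last 0 n (fun j => rsum 0 j _)) by lia. rewrite Rplus_0_r. reflexivity.
Qed.

Lemma ex_series_zero : ex_series (fun _ : nat => 0).
Proof.
  exists 0. apply (filterlim_ext (fun _ => 0)); [|apply filterlim_const].
  intros n. rewrite sum_n_const. simpl. ring.
Qed.

Lemma Series_zero : Series (fun _ : nat => 0) = 0.
Proof. rewrite (Series_ext _ (fun _ => 0 * 0)), Series_scal_l by (intros; ring). ring. Qed.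

Lemma Series_rsum (F : nat -> nat -> R) m n :
  (forall j, (m <= j <= n)%nat -> ex_series (F j)) ->
  ex_series (fun k => rsum m n (fun j => F j k)) /\
  Series (fun k => rsum m n (fun j => F j k)) = rsum m n (fun j => Series (F j)).
Proof.
  intros HF. unfold rsum.
  assert (Hl : forall j, In j (seq m (S n - m)) -> ex_series (F j))
    by (intros j Hj; apply in_seq in Hj; apply HF; lia).
  revert Hl. induction (seq m (S n - m)) as [|j l IH]; simpl; intros Hl.
  - split; [apply ex_series_zero | apply Series_zero].
  - destruct IH as [IHex IHeq]; [auto|].
    split; [exact (ex_series_plus _ _ (Hl j (or_introl eq_refl)) IHex)|].
    rewrite Series_plus, IHeq by auto. reflexivity.
Qed.

Lemma Series_nonneg f : (forall k, 0 <= f k) -> ex_series f -> 0 <= Series f.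
Proof.
  intros Hf Hex. rewrite <- Series_zero. apply Series_le; [|assumption].
  intros k. split; [lra | apply Hf].
Qed.

Lemma Series_tail_le f u :
  (forall k, 0 <= f k) -> ex_series f -> Series (fun k => f (u + k)%nat) <= Series f.
Proof.
  intros Hf Hex. destruct u as [|u]; [right; reflexivity|].
  rewrite (Series_incr_n f (S u)) by (auto; lia).
  enough (0 <= sum_f_R0 f u) by (simpl; lra).
  induction u as [|u IH]; simpl; [|pose proof (Hf (S u))]; auto; lra.
Qed.

Lemma Series_term_le f u : (forall k, 0 <= f k) -> ex_series f -> f u <= Series f.
Proof.
  intros Hf Hex. eapply Rle_trans; [|apply (Series_tail_le f u Hf Hex)].
  assert (Htail : ex_series (fun k => f (u + k)%nat)) by (apply ex_series_incr_n; auto).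
  rewrite Series_incr_1, Nat.add_0_r by auto.
  enough (0 <= Series (fun k => f (u + S k)%nat)) by lra.
  apply Series_nonneg; [auto|].
  apply (ex_series_incr_1 (fun k => f (u + k)%nat)). auto.
Qed.

Lemma pmf1_rsum_le1 f n : pmf1 f -> rsum 1 n f <= 1.
Proof.
  intros (Hf0 & Hf & Hsum).
  assert (Hex : ex_series f) by (exists 1; auto).
  rewrite <- (is_series_unique f 1 Hsum).
  replace (rsum 1 n f) with (rsum 0 n f) by (rewrite rsum_first, Hf0 by lia; ring).
  rewrite (Series_incr_n f (S n)) by (auto; lia). simpl Init.Nat.pred.
  replace (rsum 0 n f) with (sum_f_R0 f n).
  - enough (0 <= Series (fun k => f (S n + k)%nat)) by lra.
    apply Series_nonneg; [auto | apply ex_series_incr_n; auto].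
  - induction n as [|n IH]; [rewrite rsum_single | rewrite rsum_last, <- IH by lia]; reflexivity.
Qed.

Lemma arr_bounds lam g u n : pmf1 g -> 0 <= lam <= 1 -> 0 <= arr lam g u n <= 1.
Proof.
  intros Hg Hlam. revert n. induction u as [|u IH]; intros n; simpl.
  - destruct (Nat.eqb n 0); lra.
  - assert (Hconv : 0 <= rsum 1 n (fun i => g i * arr lam g u (n - i)%nat) <= 1).
    { pose proof (pmf1_rsum_le1 g n Hg) as Hmass. destruct Hg as (_ & Hg & _). split.
      - apply rsum_nonneg. intros i _. specialize (IH (n - i)%nat). specialize (Hg i). nra.
      - eapply Rle_trans; [|exact Hmass]. apply rsum_le. intros i _. specialize (IH (n - i)%nat). specialize (Hg i). nra. }
    specialize (IH n). nra.
Qed.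

Lemma contraction_zero (q M : R) (Z : nat -> R) :
  0 <= q < 1 ->
  (forall u, (1 <= u)%nat -> Z u = q * Z (S u)) ->
  (forall u, (1 <= u)%nat -> Rabs (Z u) <= M) ->
  forall u, (1 <= u)%nat -> Z u = 0.
Proof.
  intros Hq Hrec Hbound u Hu.
  assert (Hiter : forall N, Z u = q ^ N * Z (u + N)%nat).
  { induction N as [|N IH]; [rewrite Nat.add_0_r; simpl; ring|].
    rewrite IH, (Hrec (u + N)%nat), <- plus_n_Sm by lia. simpl. ring. }
  destruct (Req_dec (Z u) 0) as [Hz|Hz]; [exact Hz|exfalso].
  pose proof (Rabs_pos_lt _ Hz) as Hpos.
  pose proof (Hbound u Hu) as HM.
  destruct (pow_lt_1_zero q ltac:(rewrite Rabs_pos_eq; lra) (Rabs (Z u) / (2 * M)))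
    as [N HN]; [apply Rdiv_lt_0_compat; lra|].
  specialize (HN N (le_n N)). rewrite Rabs_pos_eq in HN by (apply pow_le; lra).
  assert (Hdecay : Rabs (Z u) <= q ^ N * M).
  { rewrite (Hiter N), Rabs_mult, (Rabs_pos_eq (q ^ N)) by (apply pow_le; lra).
    apply Rmult_le_compat_l; [apply pow_le; lra | apply Hbound; lia]. }
  apply (Rmult_lt_compat_r M) in HN; [|lra].
  replace (Rabs (Z u) / (2 * M) * M) with (Rabs (Z u) / 2) in HN by (field; lra).
  lra.
Qed.

Section ResidualService.

Variables (lam : R) (g sf : nat -> R).
Hypothesis Hg : pmf1 g.
Hypothesis Hlam : 0 <= lam <= 1.
Hypothesis Hsf : forall k, 0 <= sf k.
Hypothesis Hsf_ex : ex_series sf.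

(* [kres u n] is the coefficient of [x^n] in [sum_k sf (u+k) (1 - lam + lam G(x))^k],
   so that [kcoef lam g s r n = kres 0 n] for [sf = s r]. *)
Definition kres (u n : nat) : R := Series (fun k => sf (u + k)%nat * arr lam g k n).

Lemma kres_term_bounds u n k : 0 <= sf (u + k)%nat * arr lam g k n <= sf (u + k)%nat.
Proof. pose proof (arr_bounds lam g k n Hg Hlam). pose proof (Hsf (u + k)%nat). nra. Qed.

Lemma ex_series_kres u n : ex_series (fun k => sf (u + k)%nat * arr lam g k n).
Proof.
  apply (@ex_series_le R_AbsRing R_CompleteNormedModule _ (fun k => sf (u + k)%nat)).
  - intros k. pose proof (kres_term_bounds u n k).
    change norm with Rabs. rewrite Rabs_pos_eq; lra.
  - apply ex_series_incr_n. assumption.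
Qed.

Lemma kres_bounds u n : 0 <= kres u n <= Series sf.
Proof.
  split.
  - apply Series_nonneg; [apply kres_term_bounds | apply ex_series_kres].
  - eapply Rle_trans; [|apply (Series_tail_le sf u Hsf Hsf_ex)].
    apply Series_le; [apply kres_term_bounds | apply ex_series_incr_n; assumption].
Qed.

Lemma kres_step u n :
  kres u n = sf u * arr lam g 0 n + (1 - lam) * kres (S u) n
             + lam * rsum 1 n (fun j => g j * kres (S u) (n - j)%nat).
Proof.
  unfold kres at 1. rewrite Series_incr_1, Nat.add_0_r by apply ex_series_kres.
  rewrite (Series_ext _ (fun k => (1 - lam) * (sf (S u + k)%nat * arr lam g k n)
       + lam * rsum 1 n (fun j => g j * (sf (S u + k)%nat * arr lam g k (n - j)%nat)))).
  2:{ intros k. replace (u + S k)%nat with (S u + k)%nat by lia. cbn [arr].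
      rewrite (rsum_ext 1 n (fun j => g j * (sf (S u + k)%nat * arr lam g k (n - j)%nat))
                 (fun j => sf (S u + k)%nat * (g j * arr lam g k (n - j)%nat))) by (intros; ring).
      rewrite rsum_scal. ring. }
  destruct (Series_rsum (fun j k => g j * (sf (S u + k)%nat * arr lam g k (n - j)%nat)) 1 n)
    as [Hex Heq].
  { intros j _. exact (ex_series_scal_l (g j) _ (ex_series_kres (S u) (n - j))). }
  rewrite Series_plus, !Series_scal_l, Heq.
  - unfold kres. rewrite Rplus_assoc. do 3 f_equal.
    apply rsum_ext. intros j _. apply Series_scal_l.
  - exact (ex_series_scal_l (1 - lam) _ (ex_series_kres (S u) n)).
  - exact (ex_series_scal_l lam _ Hex).
Qed.

Lemma kres_unique (P : nat -> nat -> R) (C : R) :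
  0 < lam ->
  (forall u, (1 <= u)%nat -> P 0%nat u = (1 - lam) * P 0%nat (S u) + sf u * C) ->
  (forall n u, (1 <= n)%nat -> (1 <= u)%nat ->
     P n u = (1 - lam) * P n (S u) + lam * rsum 1 n (fun j => g j * P (n - j)%nat (S u))) ->
  (forall n u, (1 <= u)%nat -> 0 <= P n u) ->
  (forall n, ex_series (fun u => P n (S u))) ->
  forall n u, (1 <= u)%nat -> P n u = C * kres u n.
Proof.
  intros Hlam0 HP0 HPn HPnn HPex n.
  induction n as [n IH] using Wf_nat.lt_wf_ind.
  intros u Hu. apply Rminus_diag_uniq. revert u Hu.
  apply (contraction_zero (1 - lam) (Series (fun u => P n (S u)) + Rabs C * Series sf)
           (fun u => P n u - C * kres u n)); [lra | |]; intros u Hu; cbv beta.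
  - rewrite (kres_step u n). destruct n as [|n].
    + rewrite HP0, rsum_empty by lia. simpl arr. ring.
    + rewrite HPn by lia. simpl (arr lam g 0 (S n)).
      rewrite (rsum_ext 1 (S n) _ (fun j => C * (g j * kres (S u) (S n - j))))
        by (intros j Hj; rewrite IH by lia; ring).
      rewrite rsum_scal. ring.
  - assert (HPu : 0 <= P n u <= Series (fun u => P n (S u))).
    { split; [apply HPnn; lia|].
      replace u with (S (u - 1)) by lia.
      apply (Series_term_le (fun u => P n (S u))); [intros; apply HPnn; lia | apply HPex]. }
    pose proof (kres_bounds u n). pose proof (Rle_abs C). pose proof (Rle_abs (- C)).
    rewrite Rabs_Ropp in *. apply Rabs_le. split; nra.
Qed.

End ResidualService.

Lemma eaux_S g f n i : eaux g (S f) n i =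
  if Nat.eqb i n then 1 else if Nat.ltb n i then 0
  else rsum (S i) (n - 1) (fun j => eaux g f n j * g (j - i)%nat) + g (n - i)%nat.
Proof. reflexivity. Qed.

Lemma eaux_fuel_S g n f j : (n - j < f)%nat -> eaux g f n j = eaux g (S f) n j.
Proof.
  revert j. induction f as [|f IH]; intros j Hj; [lia|].
  rewrite (eaux_S g (S f)), (eaux_S g f).
  destruct (Nat.eqb j n) eqn:Ejn; [reflexivity|].
  destruct (Nat.ltb n j) eqn:Enj; [reflexivity|].
  apply Nat.eqb_neq in Ejn. apply Nat.ltb_ge in Enj.
  f_equal. apply rsum_ext. intros i Hi. rewrite IH by lia. reflexivity.
Qed.

Lemma ecoef_diag g n : ecoef g n n = 1.
Proof. unfold ecoef. rewrite eaux_S, Nat.eqb_refl. reflexivity. Qed.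

Lemma ecoef_rec g n k : (k < n)%nat ->
  ecoef g n k = rsum (S k) n (fun j => ecoef g n j * g (j - k)%nat).
Proof.
  intros Hk. destruct n as [|n]; [lia|].
  unfold ecoef at 1. rewrite eaux_S.
  replace (Nat.eqb k (S n)) with false by (symmetry; apply Nat.eqb_neq; lia).
  replace (Nat.ltb (S n) k) with false by (symmetry; apply Nat.ltb_ge; lia).
  rewrite (rsum_last (S k) n), ecoef_diag, Rmult_1_l, Nat.sub_succ, Nat.sub_0_r by lia.
  f_equal. apply rsum_ext. intros j Hj.
  unfold ecoef. rewrite eaux_fuel_S by lia. reflexivity.
Qed.

Lemma convolution_reflect g x m : g 0%nat = 0 ->
  rsum 1 m (fun i => g i * x (m - i)%nat) = rsum 0 m (fun k => g (m - k)%nat * x k).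
Proof.
  intros Hg0. rewrite <- (rsum_reflect m (fun k => g (m - k)%nat * x k)), (rsum_first 0) by lia.
  rewrite Nat.sub_0_r, Nat.sub_diag, Hg0, Rmult_0_l, Rplus_0_l.
  apply rsum_ext. intros i Hi. replace (m - (m - i))%nat with i by lia. reflexivity.
Qed.

Lemma ecoef_deconv g (x q : nat -> R) n :
  g 0%nat = 0 ->
  (forall m, (m <= n)%nat -> q m = x m - rsum 1 m (fun i => g i * x (m - i)%nat)) ->
  rsum 0 n (fun m => ecoef g n m * q m) = x n.
Proof.
  intros Hg0 Hq.
  set (defect k := ecoef g n k - rsum k n (fun j => ecoef g n j * g (j - k)%nat)).
  transitivity (rsum 0 n (fun k => x k * defect k)).
  - rewrite (rsum_ext 0 n _ (fun m => ecoef g n m * x m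
               + (-1) * rsum 0 m (fun k => ecoef g n m * g (m - k)%nat * x k))).
    2:{ intros m Hm. rewrite Hq, convolution_reflect by lia || assumption.
        rewrite (rsum_ext 0 m (fun k => ecoef g n m * g (m - k)%nat * x k)
                   (fun k => ecoef g n m * (g (m - k)%nat * x k))) by (intros; ring).
        rewrite rsum_scal. ring. }
    rewrite rsum_plus, rsum_scal, <- rsum_exchange.
    rewrite (rsum_ext 0 n (fun k => x k * defect k) (fun k => ecoef g n k * x k
               + (-1) * rsum k n (fun j => ecoef g n j * g (j - k)%nat * x k))).
    2:{ intros k Hk. unfold defect.
        rewrite (rsum_ext k n (fun j => ecoef g n j * g (j - k)%nat * x k)
                   (fun j => x k * (ecoef g n j * g (j - k)%nat))) by (intros; ring).
        rewrite rsum_scal. ring. }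
    rewrite rsum_plus, rsum_scal. reflexivity.
  - assert (Hdefect : forall k, (k < n)%nat -> defect k = 0).
    { intros k Hk. unfold defect.
      rewrite (rsum_first k), Nat.sub_diag, Hg0, Rmult_0_r, Rplus_0_l, <- ecoef_rec by lia.
      ring. }
    assert (Hlast : defect n = 1).
    { unfold defect. rewrite rsum_single, Nat.sub_diag, Hg0, ecoef_diag. ring. }
    destruct n as [|n]; [rewrite rsum_single, Hlast; ring|].
    rewrite rsum_last, Hlast by lia.
    rewrite (rsum_ext 0 n _ (fun k => 0 * x k)) by (intros k Hk; rewrite Hdefect by lia; ring).
    rewrite rsum_scal. ring.
Qed.

(* The bracket of (E3): the rate at which services of batches of size [r] start. *)
Definition start_rate (a b : nat) (lam : R) (g : nat -> R) (delta : bool) (p0 : nat -> R)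
  (p : nat -> nat -> nat -> R) (Q : nat -> nat -> R) (r : nat) : R :=
  rsum a b (fun m => (1 - lam) * p r m 1%nat + lam * rsum 1 r (fun i => g i * p (r - i)%nat m 1%nat))
  + (1 - lam) * Q r 1%nat + lam * rsum 1 r (fun i => g i * Q (r - i)%nat 1%nat)
  + (1 - dR delta) * lam * rsum 0 (a - 1) (fun i => g (r - i)%nat * p0 i).

Lemma pplus_start_rate a b lam g s v delta p0 p Q n i :
  0 < lam < 1 -> pmf1 g -> pmf1 (s i) -> (a <= i <= b - 1)%nat ->
  stationary a b lam g s v delta p0 p Q ->
  pplus a b lam g p Q n i
  = / tau a b p Q * start_rate a b lam g delta p0 p Q i * kcoef lam g s i n.
Proof.
  intros Hlam Hg Hs Hi Hst.
  destruct Hst as (_ & Hpnn & _ & _ & _ & E3 & E4 & _ & _ & _ & _ & Hpex & _).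
  destruct Hs as (Hs0 & Hsnn & Hssum).
  assert (Hsex : ex_series (s i)) by (exists 1; exact Hssum).
  assert (Hlam' : 0 <= lam <= 1) by lra.
  set (C := start_rate a b lam g delta p0 p Q i).
  assert (Hp : forall n u, (1 <= u)%nat -> p n i u = C * kres lam g (s i) u n).
  { apply kres_unique; try assumption; try lra.
    - intros u Hu. rewrite E3 by lia. unfold C, start_rate. ring.
    - intros m u Hm Hu. apply E4; lia.
    - intros m u Hu. apply Hpnn; lia.
    - intros m. apply Hpex. lia. }
  change (kcoef lam g s i n) with (kres lam g (s i) 0 n).
  rewrite (kres_step lam g (s i) Hg Hlam' Hsnn Hsex), Hs0.
  unfold pplus. rewrite Hp by lia.
  rewrite (rsum_ext 1 n _ (fun j => C * (g j * kres lam g (s i) 1 (n - j)%nat)))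
    by (intros j Hj; rewrite Hp by lia; ring).
  rewrite rsum_scal. ring.
Qed.

Lemma dormant_term a b lam g s v delta p0 p Q i :
  g 0%nat = 0 -> stationary a b lam g s v delta p0 p Q ->
  (1 - dR delta) * rsum 0 (a - 1) (fun m => Qplus a b lam g p Q m
                                      * rsum m (a - 1) (fun j => ecoef g j m * g (i - j)%nat))
  = / tau a b p Q * ((1 - dR delta) * lam * rsum 0 (a - 1) (fun j => g (i - j)%nat * p0 j)).
Proof.
  intros Hg0 Hst. destruct delta; simpl dR; [ring|].
  destruct Hst as (_ & _ & _ & E1 & E2 & _). simpl dR in E1, E2.
  set (x m := / tau a b p Q * (lam * p0 m)).
  assert (Hconv : forall m, (m <= a - 1)%nat ->
            Qplus a b lam g p Q m = x m - rsum 1 m (fun k => g k * x (m - k)%nat)).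
  { intros m Hm. unfold Qplus, x.
    rewrite (rsum_ext 1 m (fun k => g k * (/ tau a b p Q * (lam * p0 (m - k)%nat)))
               (fun k => / tau a b p Q * lam * (g k * p0 (m - k)%nat))) by (intros; ring).
    rewrite rsum_scal, (Rmult_assoc (/ tau a b p Q) lam), <- Rmult_minus_distr_l. f_equal.
    destruct m as [|m].
    - rewrite !rsum_empty by lia. lra.
    - specialize (E2 (S m) ltac:(lia)). lra. }
  rewrite (rsum_ext 0 (a - 1) _ (fun m => rsum m (a - 1)
             (fun j => ecoef g j m * Qplus a b lam g p Q m * g (i - j)%nat))).
  2:{ intros m Hm. rewrite <- rsum_scal. apply rsum_ext. intros; ring. }
  rewrite rsum_exchange.
  rewrite (rsum_ext 0 (a - 1) _ (fun j => g (i - j)%nat * x j)).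
  - unfold x. rewrite (rsum_ext 0 (a - 1) _ (fun j => / tau a b p Q * lam * (g (i - j)%nat * p0 j)))
      by (intros; ring).
    rewrite rsum_scal. ring.
  - intros j Hj. rewrite <- (ecoef_deconv g x (Qplus a b lam g p Q) j Hg0)
      by (intros; apply Hconv; lia).
    rewrite <- rsum_scal. apply rsum_ext. intros; ring.
Qed.

Theorem mainTheorem5
  (a b : nat) (lam : R) (g : nat -> R) (s : nat -> nat -> R) (v : nat -> R)
  (delta : bool) (p0 : nat -> R) (p : nat -> nat -> nat -> R) (Q : nat -> nat -> R)
  (Hab : (1 <= a <= b)%nat)
  (Hlam : 0 < lam < 1)
  (Hg : pmf1 g) (Hgm : finite_mean g)
  (Hs : forall r, (a <= r <= b)%nat -> pmf1 (s r) /\ finite_mean (s r))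
  (Hv : pmf1 v) (Hvm : finite_mean v)
  (Hrho : lam * mean g / (INR b * / mean (s b)) < 1)
  (Hst : stationary a b lam g s v delta p0 p Q) :
  forall n i, (a <= i <= b - 1)%nat ->
    pplus a b lam g p Q n i =
      ((1 - dR delta) *
         rsum 0 (a - 1) (fun m => Qplus a b lam g p Q m *
                            rsum m (a - 1) (fun j => ecoef g j m * g (i - j)%nat))
       + (pplus_tot a b lam g p Q i + Qplus a b lam g p Q i))
      * kcoef lam g s i n.
Proof.
  intros n i Hi.
  assert (Hsi : pmf1 (s i)) by (apply Hs; lia).
  rewrite (pplus_start_rate a b lam g s v delta p0 p Q n i Hlam Hg Hsi Hi Hst).
  destruct Hg as (Hg0 & _).
  rewrite (dormant_term a b lam g s v delta p0 p Q i Hg0 Hst).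
  unfold start_rate, pplus_tot, pplus, Qplus. rewrite rsum_scal. ring.
Qed.
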